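(* Let $\widehat{\mathscr{O}}$ be a commutative local principal ideal ring, complete with respect to its maximal ideal $\mathfrak{m}=(\pi)$, whose residue field $k$ has characteristic different from $2$. Let $A\in \mathrm{GL}_n(\widehat{\mathscr{O}})$, and denote by $\overline{A}\in\mathrm{M}_n(k)$ its reduction modulo $\mathfrak m$. Assume that there exists a monic polynomial $F(t)\in \widehat{\mathscr{O}}[t]$ with $F(A)=0$ such that $$\deg\bigl(\overline{F}(t)\bigr)=\deg\bigl(\mathrm{Min}_{k,\overline{A}}(t)\bigr),$$ where $\overline{F}$ is the reduction of $F$ modulo $\mathfrak m$ and $\mathrm{Min}_{k,\overline{A}}$ is the minimal polynomial of $\overline{A}$ over $k$. Then, for every $i\in\mathbb{N}$, the null ideal $$N^{\mathscr{O}_{i+1}}_{A_{i+1}}=\{G(t)\in\mathscr{O}_{i+1}[t]: G(A_{i+1})=0\}$$ is principal and is generated by $F_{i+1}(t)$, where $\mathscr{O}_{i}=\widehat{\mathscr{O}}/\pi^{i}\widehat{\mathscr{O}}$, and $A_{i}$, $F_{i}(t)$ denote the images of $A$ and $F(t)$ under the reduction $\widehat{\mathscr{O}}\to\mathscr{O}_{i}$.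
   Context: A commutative ring $\mathscr R$ is complete with respect to an ideal $I$ if the canonical map $\mathscr R\to\varprojlim_j \mathscr R/I^j$ is an isomorphism. For $\ell\ge1$, $\mathscr{O}_\ell=\widehat{\mathscr{O}}/\pi^\ell\widehat{\mathscr{O}}$; reductions of elements, matrices and polynomials from $\widehat{\mathscr{O}}$ to $\mathscr{O}_\ell$ are applied entrywise/coefficientwise. For a commutative ring $\mathscr R$ and $X\in\mathrm{M}_n(\mathscr R)$, the null ideal is $N^{\mathscr R}_X=\{G\in\mathscr R[t]:G(X)=0\}$. *)

From HB Require Import structures.
From mathcomp Require Import all_boot all_order all_algebra.
Set Implicit Arguments. Unset Strict Implicit. Unset Printing Implicit Defensive.
Import GRing.Theory.
Local Open Scope ring_scope.

Definition dvdr (R : comNzRingType) (a x : R) : Prop := exists r : R, x = r * a.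

Definition is_ideal (R : comNzRingType) (I : R -> Prop) : Prop :=
  [/\ I 0, (forall x y, I x -> I y -> I (x + y)) & (forall r x, I x -> I (r * x))].

Definition principal_ideal_ring (R : comNzRingType) : Prop :=
  forall I : R -> Prop, is_ideal I -> exists a : R, forall x, I x <-> dvdr a x.

(* R is local and its (unique) maximal ideal, the set of non-units, is (pi) *)
Definition local_with_maximal_ideal (R : comUnitRingType) (pi : R) : Prop :=
  forall x : R, x \isn't a GRing.unit <-> dvdr pi x.

(* R is complete w.r.t. I = (pi): the canonical map R -> lim_j R/I^j
   (I^j = pi^j R) is injective and surjective. *)
Definition complete_wrt (R : comNzRingType) (pi : R) : Prop :=
  (forall x : R, (forall j, dvdr (pi ^+ j) x) -> x = 0) /\
  (forall s : nat -> R, (forall j, dvdr (pi ^+ j) (s j.+1 - s j)) ->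
     exists x : R, forall j, dvdr (pi ^+ j) (x - s j)).

Definition null_ideal (S : comNzRingType) (n : nat) (X : 'M[S]_n.+1) : {poly S} -> Prop :=
  fun G => horner_mx X G = 0.

From HB Require Import structures.
From mathcomp Require Import all_boot all_order all_algebra.
Set Implicit Arguments. Unset Strict Implicit. Unset Printing Implicit Defensive.
Import GRing.Theory.
Local Open Scope ring_scope.

(* Let d = deg F = deg Min(A mod pi). Minimality of d makes the rows I, A, ...,
   A^(d-1) of [powers_mx A d] independent over k, and over the local ring R this
   lifts to a right inverse of [powers_mx A d]. Hence, for any surjective ring
   morphism red out of R, a polynomial r of degree < d with red(r(A)) = 0
   satisfies red r = 0. Lifting G to g and dividing by the monic F, g = q F + r,
   the remainder has this property, so G = red(q) red(F). Only the surjectivity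
   of the reduction to O_(i+1) is used, not its kernel. *)

Lemma map_poly_surj (aR rR : nzRingType) (f : {rmorphism aR -> rR}) :
  (forall y, exists x, f x = y) -> forall p : {poly rR}, exists q, map_poly f q = p.
Proof.
move=> f_surj; elim/poly_ind => [|p c [q <-]]; first by exists 0; rewrite rmorph0.
have [x <-] := f_surj c.
by exists (q * 'X + x%:P); rewrite rmorphD rmorphM /= map_polyX map_polyC.
Qed.

Lemma map_mx_surj (aT rT : Type) (f : aT -> rT) m n :
  (forall y, exists x, f x = y) -> forall B : 'M[rT]_(m, n), exists A, map_mx f A = B.
Proof.
move=> f_surj B.
have [g gK] := fin_all_exists (fun ij : 'I_m * 'I_n => f_surj (B ij.1 ij.2)).
by exists (\matrix_(i, j) g (i, j)); apply/matrixP => i j; rewrite !mxE gK.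
Qed.

Section LocalResidue.

Variables (R : comUnitRingType) (pi : R) (k : fieldType) (res : {rmorphism R -> k}).
Hypothesis local_R : local_with_maximal_ideal pi.
Hypothesis res_surj : forall y, exists x, res x = y.
Hypothesis res_pi : forall x, dvdr pi x -> res x = 0.

Lemma unitr_res_neq0 x : res x != 0 -> x \is a GRing.unit.
Proof. by apply: contraTT => /local_R /res_pi ->; rewrite eqxx. Qed.

Lemma unitmx_res d (N : 'M[R]_d) : map_mx res N \in unitmx -> N \in unitmx.
Proof. by rewrite !unitmxE det_map_mx unitfE => /unitr_res_neq0. Qed.

Lemma row_free_res_rinv m d (M : 'M[R]_(d, m)) :
  row_free (map_mx res M) -> exists B, M *m B = 1%:M.
Proof.
move=> /row_freeP[Bk]; have [B <-] := map_mx_surj res_surj Bk => MBk.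
have MB_unit : M *m B \in unitmx.
  by apply: unitmx_res; rewrite map_mxM MBk unitmx1.
by exists (B *m invmx (M *m B)); rewrite mulmxA mulmxV.
Qed.

End LocalResidue.

Section NullIdealOfMonic.

Variables (R : comNzRingType) (n : nat) (A : 'M[R]_n.+1) (F : {poly R}).
Hypotheses (F_monic : F \is monic) (FA0 : horner_mx A F = 0).
Hypothesis powers_rinv : exists B, powers_mx A (size F).-1 *m B = 1%:M.
Variables (S : comNzRingType) (red : {rmorphism R -> S}).
Hypothesis red_surj : forall y, exists x, red x = y.

Lemma map_horner_mx_eq0 (r : {poly R}) :
  (size r <= (size F).-1)%N -> map_mx red (horner_mx A r) = 0 ->
  map_poly red r = 0.
Proof.
move=> r_small rA0; have [B MB] := powers_rinv.
set u : 'rV_(size F).-1 := poly_rV r.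
have uM : u *m powers_mx A (size F).-1 = mxvec (horner_mx A r).
  by rewrite -[in RHS](poly_rV_K r_small) horner_rVpoly vec_mxK.
rewrite -(poly_rV_K r_small) map_rVpoly -/u.
rewrite -[u]mulmx1 -MB mulmxA uM map_mxM map_mxvec rA0.
by rewrite linear0 mul0mx linear0.
Qed.

Lemma null_ideal_map_monic (G : {poly S}) :
  null_ideal (map_mx red A) G <-> exists Q, G = Q * map_poly red F.
Proof.
split=> [GA0 | [Q ->]]; last first.
  by rewrite /null_ideal rmorphM /= -map_horner_mx FA0 map_mx0 mulr0.
have [g gG] := map_poly_surj red_surj G.
have g_eq := Pdiv.RingMonic.rdivp_eq F_monic g.
set q := Pdiv.Ring.rdivp g F in g_eq; set r := Pdiv.Ring.rmodp g F in g_eq.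
have r0 : map_poly red r = 0.
  apply: map_horner_mx_eq0.
    rewrite -ltnS prednK ?size_poly_gt0 ?monic_neq0 //.
    by rewrite Pdiv.Ring.ltn_rmodp monic_neq0.
  have -> : horner_mx A r = horner_mx A g.
    by rewrite [in RHS]g_eq rmorphD rmorphM /= FA0 mulr0 add0r.
  by rewrite map_horner_mx gG.
by exists (map_poly red q); rewrite -gG {1}g_eq rmorphD rmorphM /= r0 addr0.
Qed.

End NullIdealOfMonic.

Theorem proposition2p2
  (R : comUnitRingType) (pi : R)
  (hloc : local_with_maximal_ideal pi)
  (hpir : principal_ideal_ring R)
  (hcomp : complete_wrt pi)
  (k : fieldType) (res : {rmorphism R -> k})
  (hres_surj : forall y : k, exists x : R, res x = y)
  (hres_ker : forall x : R, res x = 0 <-> dvdr pi x)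
  (hchar : ~~ (2%N \in [pchar k]))
  (n : nat) (A : 'M[R]_n.+1) (hA : A \in unitmx)
  (F : {poly R}) (hFmonic : F \is monic) (hFA : horner_mx A F = 0)
  (hdeg : size (map_poly res F) = size (mxminpoly (map_mx res A))) :
  forall (i : nat) (S : comNzRingType) (red : {rmorphism R -> S}),
    (forall y : S, exists x : R, red x = y) ->
    (forall x : R, red x = 0 <-> dvdr (pi ^+ i.+1) x) ->
    forall G : {poly S},
      null_ideal (map_mx red A) G <-> exists Q : {poly S}, G = Q * map_poly red F.
Proof.
move=> i S red red_surj _ G; apply: null_ideal_map_monic => //.
have degF : (size F).-1 = degree_mxminpoly (map_mx res A).
  rewrite -(size_map_poly_id0 (f := res)) ?hdeg ?size_mxminpoly //.
  by rewrite (eqP hFmonic) rmorph1 oner_eq0.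
have res_pi x : dvdr pi x -> res x = 0 by move/hres_ker.
apply: (row_free_res_rinv hloc hres_surj res_pi).
by rewrite map_powers_mx degF minpoly_mx_free.
Qed.
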